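(* Let $I\subseteq V$ with $|I|=5$ such that the induced subgraph $G_I$ is a cycle of length 5. Let $X_I$ be a symmetric matrix indexed by $I$ with $X_I\succeq 0$, $X_I\geq 0$ (entrywise), diagonal entries $x_i$ ($i\in I$), and $X_{i,j}=0$ for every edge $[i,j]$ of $G_I$. Suppose that (i) for every nonempty clique $C_1\subseteq I$ of $G_I$ and every $j\in I\setminus C_1$: $\sum_{i\in C_1}X_{i,j}\leq x_j$; and (ii) for all disjoint nonempty cliques $C_1,C_2\subseteq I$ of $G_I$: $\sum_{i\in C_1\cup C_2}x_i\leq 1+\sum_{i\in C_1,\,j\in C_2}X_{i,j}$. Then $X_I\in\mathrm{STAB}^2(G_I)$ if and only if $$\sum_{i\in I}x_i\leq 1+\sum_{\{i,j\}\in N}X_{i,j},$$ where $N$ is the set of the five unordered pairs of distinct nonadjacent vertices of $G_I$.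
   Context: Let $G$ be a simple graph with vertex set $V=\{1,\dots,n\}$ and edge set $E$; $G_I$ denotes the subgraph induced by $I\subseteq V$. For a graph $H$ with vertex set $I$, let $S(H)=\{s\in\{0,1\}^I: s_is_j=0\ \forall [i,j]\in E(H)\}$ (incidence vectors of stable sets, including the zero vector) and $\mathrm{STAB}^2(H)=\operatorname{conv}\{ss^T: s\in S(H)\}$. *)

From mathcomp Require Import all_boot all_order all_algebra.
From mathcomp Require Import reals.
Set Implicit Arguments. Unset Strict Implicit. Unset Printing Implicit Defensive.
Import Order.TTheory GRing.Theory Num.Theory.
Local Open Scope ring_scope.

(* A simple graph on V = 'I_n (vertices 0..n-1, i.e. {1,..,n} shifted):
   edge relation e, symmetric and irreflexive. *)
Definition simple_graph (n : nat) (e : rel 'I_n) : Prop :=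
  (forall i j, e i j = e j i) /\ (forall i, ~~ e i i).

Definition induced_C5 (n : nat) (e : rel 'I_n) (I : {set 'I_n}) : Prop :=
  exists c : 'I_5 -> 'I_n,
    injective c /\ I = c @: [set: 'I_5] /\
    forall a b : 'I_5,
      e (c a) (c b) = ((val b == (val a).+1 %% 5) || (val a == (val b).+1 %% 5))%N.

Definition stable (n : nat) (e : rel 'I_n) (S : {set 'I_n}) : bool :=
  [forall i in S, forall j in S, ~~ e i j].

Definition clique_in (n : nat) (e : rel 'I_n) (I C : {set 'I_n}) : bool :=
  (C \subset I) && [forall i in C, forall j in C, (i != j) ==> e i j].

Definition psd_on (R : realType) (n : nat) (I : {set 'I_n})
    (X : 'I_n -> 'I_n -> R) : Prop :=
  forall v : 'I_n -> R, 0 <= \sum_(i in I) \sum_(j in I) v i * X i j * v j.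

(* X_I lies in STAB^2(G_I) = conv { s s^T : s in S(G_I) }: a convex
   combination of the matrices s s^T, where s ranges over incidence vectors
   (indexed by I) of stable sets S of G_I (S = set0 gives the zero vector). *)
Definition in_STAB2 (R : realType) (n : nat) (e : rel 'I_n) (I : {set 'I_n})
    (X : 'I_n -> 'I_n -> R) : Prop :=
  exists lam : {set 'I_n} -> R,
    (forall S, 0 <= lam S) /\
    (forall S, lam S != 0 -> (S \subset I) && stable e S) /\
    \sum_(S : {set 'I_n}) lam S = 1 /\
    (forall i j, i \in I -> j \in I ->
       X i j = \sum_(S : {set 'I_n}) lam S * ((i \in S) && (j \in S))%:R).

From mathcomp Require Import all_boot all_order all_algebra.
From mathcomp Require Import reals lra.
Set Implicit Arguments. Unset Strict Implicit. Unset Printing Implicit Defensive.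
Import Order.TTheory GRing.Theory Num.Theory.
Local Open Scope ring_scope.

(* The inequality  sum_i x_i <= 1 + sum_N X_ij  is valid for STAB^2 of every
   graph: a stable set S contributes |S| on the left and 1 + C(|S|,2) on the
   right, because each member of S other than its least one forms a
   nonadjacent pair with it.  Conversely, if every vertex i satisfies
   sum_{j nonadjacent to i} X_ij <= x_i, then X is the convex combination
   giving weight X_ij to each nonadjacent pair {i,j}, weight
   x_i - sum_{j nonadjacent to i} X_ij to {i}, and the remaining mass
   1 - sum_i x_i + sum_N X_ij (nonnegative exactly by the inequality) to the
   empty set.  In a 5-cycle the two non-neighbours of a vertex are adjacent,
   so this vertex condition is hypothesis (i) for that clique. *)

Lemma sum_only1 (R : nmodType) (T : finType) (A : {pred T}) (a : T)
    (F : T -> R) :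
  a \in A -> (forall t, t \in A -> t != a -> F t = 0) ->
  \sum_(t in A) F t = F a.
Proof.
move=> Aa F0; rewrite (bigD1 a) //= big1 ?addr0 // => t /andP[At nta].
exact: F0.
Qed.
Arguments sum_only1 {R T A} a {F}.

Lemma set2_indicator (R : pzSemiRingType) n (i j k l : 'I_n) : k != l ->
  ((i \in [set k; l]) && (j \in [set k; l]))%:R
    = (i == k)%:R * ((j == k) || (j == l))%:R
      + (i == l)%:R * ((j == l) || (j == k))%:R :> R.
Proof.
move=> nkl; rewrite !inE [(j == l) || _]orbC.
have [-> | _] := eqVneq i k; first by rewrite (negbTE nkl) mul1r mul0r addr0.
by case: (i == l); rewrite ?mul1r ?mul0r ?add0r.
Qed.

Lemma stableP n (e : rel 'I_n) (S : {set 'I_n}) :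
  reflect (forall i j, i \in S -> j \in S -> ~~ e i j) (stable e S).
Proof.
apply: (iffP forallP) => [st i j Si Sj | st i].
  by move/implyP/(_ Si)/forallP/(_ j)/implyP/(_ Sj): (st i).
by apply/implyP => Si; apply/forallP => j; apply/implyP; apply: st.
Qed.

Section PairInequality.
Variables (R : realType) (n : nat) (e : rel 'I_n) (I : {set 'I_n}).

Lemma stable_card_le_pairs (S : {set 'I_n}) : S \subset I -> stable e S ->
  \sum_(i in I) (i \in S)%:R
    <= 1 + \sum_(i in I) \sum_(j in I | (i < j)%N && ~~ e i j)
             ((i \in S) && (j \in S))%:R :> R.
Proof.
move=> /subsetP SI /stableP stS.
have [-> | /set0Pn[i0 Si0]] := eqVneq S set0.
  rewrite big1 => [|i _]; last by rewrite inE.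
  by rewrite addr_ge0 //; do 2 apply: sumr_ge0 => ? _.
have [m Sm mmin] : exists2 m, m \in S & forall i, i \in S -> (m <= i)%N.
  by case: (arg_minnP val Si0) => m; exists m.
have Im := SI m Sm.
rewrite (bigD1 m) // Sm lerD2l [X in _ <= X](bigD1 m) //.
apply: ler_wpDr; first by do 2 apply: sumr_ge0 => ? _.
rewrite big_mkcondr [X in _ <= X]big_mkcondr; apply: ler_sum => i Ii.
rewrite Sm; set b := i \in S; case Si: b; last by rewrite mulr0n !if_same.
have [-> | neq_im] := eqVneq i m; first by rewrite ltnn.
have lt_mi : (m < i)%N.
  rewrite ltn_neqAle (mmin i Si) andbT.
  by apply: contra neq_im => /eqP/val_inj->.
by rewrite lt_mi stS.
Qed.

Lemma pair_ineq_of_in_STAB2 (X : 'I_n -> 'I_n -> R) : in_STAB2 e I X ->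
  \sum_(i in I) X i i
    <= 1 + \sum_(i in I) \sum_(j in I | (i < j)%N && ~~ e i j) X i j.
Proof.
move=> [lam [lam_ge0 [lam_supp [lam_sum1 lamX]]]].
have -> : \sum_(i in I) X i i = \sum_S lam S * \sum_(i in I) (i \in S)%:R.
  under [RHS]eq_bigr do rewrite mulr_sumr; rewrite [RHS]exchange_big.
  apply: eq_bigr => i Ii; rewrite lamX //.
  by apply: eq_bigr => S _; rewrite andbb.
have -> : \sum_(i in I) \sum_(j in I | (i < j)%N && ~~ e i j) X i j
    = \sum_S lam S * \sum_(i in I) \sum_(j in I | (i < j)%N && ~~ e i j)
                        ((i \in S) && (j \in S))%:R.
  under [RHS]eq_bigr do rewrite mulr_sumr; rewrite [RHS]exchange_big.
  apply: eq_bigr => i Ii; under [RHS]eq_bigr do rewrite mulr_sumr.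
  by rewrite [RHS]exchange_big; apply: eq_bigr => j /andP[Ij _]; rewrite lamX.
rewrite -[X in _ <= X + _]lam_sum1 -big_split /=; apply: ler_sum => S _.
have [-> | /lam_supp/andP[SI stS]] := eqVneq (lam S) 0.
  by rewrite !mul0r addr0.
rewrite -[X in _ <= X + _]mulr1 -mulrDr ler_wpM2l //.
exact: stable_card_le_pairs.
Qed.

End PairInequality.

Section Decomposition.
Variables (R : realType) (n : nat) (e : rel 'I_n) (I : {set 'I_n}).
Variable X : 'I_n -> 'I_n -> R.
Hypotheses (e_sym : symmetric e) (e_irr : irreflexive e).
Hypothesis X_sym : forall i j, i \in I -> j \in I -> X i j = X j i.

Definition nonadj : rel 'I_n := fun i j => (i != j) && ~~ e i j.

Lemma nonadj_sym : symmetric nonadj.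
Proof. by move=> i j; rewrite /nonadj eq_sym e_sym. Qed.

Lemma sum_swap (P : rel 'I_n) (F : 'I_n -> 'I_n -> R) :
  \sum_(i in I) \sum_(j in I | P i j) F i j
    = \sum_(i in I) \sum_(j in I | P j i) F j i.
Proof.
rewrite (exchange_big_dep (mem I)) => [|i j _ /andP[]//].
by apply: eq_bigr => j Ij; apply: eq_bigl => i; rewrite [j \in I]Ij.
Qed.

Lemma sum_nonadj_swap (F : 'I_n -> 'I_n -> R) :
  \sum_(i in I) \sum_(j in I | nonadj i j) F i j
    = \sum_(i in I) \sum_(j in I | nonadj i j) F j i.
Proof.
by rewrite sum_swap; under eq_bigr do under eq_bigl do rewrite nonadj_sym.
Qed.

Lemma sum_nonadj_pairs :
  \sum_(i in I) \sum_(j in I | nonadj i j) X i j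
    = (\sum_(i in I) \sum_(j in I | (i < j)%N && ~~ e i j) X i j) *+ 2.
Proof.
rewrite mulr2n.
under eq_bigr => i _ do rewrite (bigID (fun j : 'I_n => (i < j)%N)).
rewrite big_split; congr (_ + _).
  apply: eq_bigr => i _; apply: eq_bigl => j; rewrite /nonadj -val_eqE.
  by case: ltngtP; rewrite ?andbF ?andbT.
rewrite [RHS](sum_swap (fun i j => (i < j)%N && ~~ e i j)).
apply: eq_bigr => i Ii; apply: eq_big => [j | j /andP[/andP[Ij _] _]].
  rewrite /nonadj e_sym -val_eqE -andbA.
  by case: ltngtP; rewrite ?andbF ?andbT.
exact: X_sym.
Qed.

Definition slack i := X i i - \sum_(j in I | nonadj i j) X i j.

Definition empty_weight :=
  1 - \sum_(i in I) X i i
    + (\sum_(i in I) \sum_(j in I | nonadj i j) X i j) / 2.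

(* Each nonadjacent pair {i,j} is reached twice, as (i,j) and as (j,i). *)
Definition stab_weights (S : {set 'I_n}) : R :=
  (S == set0)%:R * empty_weight
  + \sum_(i in I) (S == [set i])%:R * slack i
  + \sum_(i in I) \sum_(j in I | nonadj i j) (S == [set i; j])%:R * (X i j / 2).

Lemma sum_stab_weights (F : {set 'I_n} -> R) :
  \sum_S stab_weights S * F S
    = empty_weight * F set0 + \sum_(i in I) slack i * F [set i]
      + \sum_(i in I) \sum_(j in I | nonadj i j) X i j / 2 * F [set i; j].
Proof.
rewrite /stab_weights; under eq_bigr => S _ do rewrite !mulrDl !mulr_suml.
rewrite !big_split /= (sum_only1 set0) ?eqxx ?mul1r //; last first.
  by move=> S _ /negbTE->; rewrite !mul0r.
congr (_ + _ + _); rewrite exchange_big; apply: eq_bigr => i Ii.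
  rewrite (sum_only1 [set i]) ?eqxx ?mul1r //.
  by move=> S _ /negbTE->; rewrite !mul0r.
under eq_bigr do rewrite mulr_suml; rewrite exchange_big; apply: eq_bigr => j _.
rewrite (sum_only1 [set i; j]) ?eqxx ?mul1r //.
by move=> S _ /negbTE->; rewrite !mul0r.
Qed.

Lemma sum_pairs_entry i j : i \in I -> j \in I ->
  \sum_(k in I) \sum_(l in I | nonadj k l)
      X k l / 2 * ((i \in [set k; l]) && (j \in [set k; l]))%:R
    = (i == j)%:R * \sum_(l in I | nonadj i l) X i l + (nonadj i j)%:R * X i j.
Proof.
move=> Ii Ij.
(* [i, j in {k, l}] = psi k l + psi l k, and the two halves agree once k and
   l are swapped. *)
pose psi k l : R := (i == k)%:R * ((j == k) || (j == l))%:R.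
transitivity (\sum_(k in I) \sum_(l in I | nonadj k l) X k l * psi k l).
  under eq_bigr => k _ do under eq_bigr => l /andP[_ /andP[nkl _]] do
    rewrite set2_indicator // mulrDr.
  under eq_bigr do rewrite big_split; rewrite big_split /=.
  rewrite [X in _ + X]sum_nonadj_swap -big_split; apply: eq_bigr => k Ik.
  rewrite -big_split; apply: eq_bigr => l /andP[Il _].
  by rewrite /= (X_sym Il Ik) -mulrDl -splitr.
rewrite (sum_only1 i) // => [|k _ nki]; last first.
  by rewrite big1 // => l _; rewrite /psi eq_sym (negbTE nki) mul0r mulr0.
have split_ind l : nonadj i l ->
    ((j == i) || (j == l))%:R = (j == i)%:R + (j == l)%:R :> R.
  case/andP=> nil _; have [-> | _] := eqVneq j i.
    by rewrite (negbTE nil) addr0.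
  by rewrite add0r.
under eq_bigr => l /andP[_ nil] do
  rewrite /psi eqxx mul1r split_ind // mulrDr.
rewrite big_split /= -mulr_suml mulrC eq_sym; congr (_ + _).
have [nij | /negbTE nij] := boolP (nonadj i j).
  rewrite (sum_only1 j) ?eqxx ?mulr1 ?mul1r // => [|l _ /negbTE]; last first.
    by rewrite eq_sym => ->; rewrite mulr0.
  by rewrite unfold_in /= Ij.
rewrite big1 ?nij ?mul0r // => l /andP[_ nil].
by have [jl | _] := eqVneq j l; rewrite ?mulr0 //; move: nij; rewrite jl nil.
Qed.

Lemma stab_weights_sum1 : \sum_S stab_weights S = 1.
Proof.
have := sum_stab_weights (fun _ => 1).
under eq_bigr do rewrite mulr1; move=> ->.
rewrite mulr1; under eq_bigr do rewrite mulr1.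
under [X in _ + X]eq_bigr do under eq_bigr do rewrite mulr1.
under [X in _ + X]eq_bigr do rewrite -mulr_suml.
by rewrite -mulr_suml /empty_weight /slack sumrB; lra.
Qed.

Hypothesis X_edge : forall i j, i \in I -> j \in I -> e i j -> X i j = 0.

Lemma stab_weights_entry i j : i \in I -> j \in I ->
  X i j = \sum_S stab_weights S * ((i \in S) && (j \in S))%:R.
Proof.
move=> Ii Ij; rewrite sum_stab_weights in_set0 mulr0 add0r sum_pairs_entry //.
rewrite (sum_only1 i) // => [|k _ nki]; last first.
  by rewrite in_set1 eq_sym (negbTE nki) mulr0.
rewrite !in_set1 eqxx /slack /nonadj; have [<- | nij] := eqVneq i j.
  by rewrite mulr1 mul1r mul0r addr0 subrK.
rewrite mulr0 mul0r !add0r /=.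
by have [eij | _] := boolP (e i j); rewrite ?mul1r // X_edge // mulr0.
Qed.

Lemma stable_set1 i : stable e [set i].
Proof. by apply/stableP => x y /set1P-> /set1P->; rewrite e_irr. Qed.

Lemma stable_set2 i j : ~~ e i j -> stable e [set i; j].
Proof.
move=> nij; apply/stableP => x y.
by rewrite !inE => /orP[]/eqP-> /orP[]/eqP->; rewrite ?e_irr // e_sym.
Qed.

Lemma stab_weights_supp S :
  stab_weights S != 0 -> (S \subset I) && stable e S.
Proof.
apply: contraR => bad.
have no_atom (T : {set 'I_n}) :
    (T \subset I) && stable e T -> (S == T)%:R = 0 :> R.
  by move=> good; case: eqP bad => // ->; rewrite good.
rewrite /stab_weights no_atom ?sub0set; last first.
  by apply/stableP => ? ?; rewrite inE.
rewrite mul0r add0r big1 ?add0r => [|i Ii]; last first.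
  by rewrite no_atom ?mul0r // sub1set Ii stable_set1.
rewrite big1 // => i Ii; rewrite big1 // => j /andP[Ij /andP[_ nij]].
rewrite no_atom ?mul0r // stable_set2 // andbT.
by apply/subsetP => x; rewrite !inE => /orP[]/eqP->.
Qed.

Hypothesis X_ge0 : forall i j, i \in I -> j \in I -> 0 <= X i j.

Hypothesis pair_bound :
  \sum_(i in I) X i i
    <= 1 + \sum_(i in I) \sum_(j in I | (i < j)%N && ~~ e i j) X i j.
Hypothesis nonadj_bound :
  forall i, i \in I -> \sum_(j in I | nonadj i j) X i j <= X i i.

Lemma stab_weights_ge0 S : 0 <= stab_weights S.
Proof.
apply: addr_ge0; first apply: addr_ge0.
- rewrite mulr_ge0 // /empty_weight sum_nonadj_pairs mulr2n.
  by have := pair_bound; lra.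
- by apply: sumr_ge0 => i Ii; rewrite mulr_ge0 // subr_ge0 nonadj_bound.
- apply: sumr_ge0 => i Ii; apply: sumr_ge0 => j /andP[Ij _].
  by apply: mulr_ge0 => //; apply: divr_ge0 => //; apply: X_ge0.
Qed.

Theorem in_STAB2_of_pair_ineq : in_STAB2 e I X.
Proof.
exists stab_weights; do !split.
- exact: stab_weights_ge0.
- exact: stab_weights_supp.
- exact: stab_weights_sum1.
- exact: stab_weights_entry.
Qed.

End Decomposition.

Definition cycle5 (a b : 'I_5) : bool :=
  ((val b == (val a).+1 %% 5) || (val a == (val b).+1 %% 5))%N.

Lemma cycle5_nonadj_clique (a b d : 'I_5) :
  a != b -> ~~ cycle5 a b -> a != d -> ~~ cycle5 a d -> b != d -> cycle5 b d.
Proof.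
by case: a b d => [[|[|[|[|[|?]]]]] ?] [[|[|[|[|[|?]]]]] ?] [[|[|[|[|[|?]]]]] ?].
Qed.

Lemma induced_C5_nonadj_clique n (e : rel 'I_n) (I : {set 'I_n}) i :
  induced_C5 e I -> i \in I -> clique_in e I [set j in I | nonadj e i j].
Proof.
move=> [c [c_inj [-> c_adj]]] /imsetP[a _ ->].
apply/andP; split; first by apply/subsetP => j; rewrite inE => /andP[].
apply/forallP => x; apply/implyP; rewrite inE => /andP[/imsetP[b _ ->]].
rewrite /nonadj (inj_eq c_inj) c_adj => /andP[nab ncab].
apply/forallP => y; apply/implyP; rewrite inE => /andP[/imsetP[d _ ->]].
rewrite /nonadj (inj_eq c_inj) c_adj => /andP[nad ncad].
rewrite (inj_eq c_inj) c_adj; apply/implyP.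
exact: cycle5_nonadj_clique nab ncab nad ncad.
Qed.

Theorem lemmaL6 (R : realType) (n : nat) (e : rel 'I_n) (I : {set 'I_n})
    (X : 'I_n -> 'I_n -> R) :
  simple_graph e ->
  #|I| = 5%N ->
  induced_C5 e I ->
  (forall i j, i \in I -> j \in I -> X i j = X j i) ->
  psd_on I X ->
  (forall i j, i \in I -> j \in I -> 0 <= X i j) ->
  (forall i j, i \in I -> j \in I -> e i j -> X i j = 0) ->
  (forall (C1 : {set 'I_n}) (j : 'I_n),
      clique_in e I C1 -> C1 != set0 -> j \in I :\: C1 ->
      \sum_(i in C1) X i j <= X j j) ->
  (forall C1 C2 : {set 'I_n},
      clique_in e I C1 -> clique_in e I C2 -> C1 != set0 -> C2 != set0 ->
      [disjoint C1 & C2] ->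
      \sum_(i in C1 :|: C2) X i i
        <= 1 + \sum_(i in C1) \sum_(j in C2) X i j) ->
  (in_STAB2 e I X <->
   \sum_(i in I) X i i
     <= 1 + \sum_(i in I) \sum_(j in I | (i < j)%N && ~~ e i j) X i j).
Proof.
move=> [e_sym e_irr] _ C5 X_sym _ X_ge0 X_edge clique_bound _.
have e_irrefl : irreflexive e by move=> i; apply/negbTE.
split=> [|pair_bound]; first exact: pair_ineq_of_in_STAB2.
apply: in_STAB2_of_pair_ineq => // i Ii.
set C := [set j in I | nonadj e i j].
have -> : \sum_(j in I | nonadj e i j) X i j = \sum_(j in C) X j i.
  by apply: eq_big => [j | j /andP[Ij _]]; rewrite ?inE // X_sym.
have [-> | C_n0] := eqVneq C set0; first by rewrite big_set0 X_ge0.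
apply: clique_bound C_n0 _; first exact: induced_C5_nonadj_clique.
by rewrite !inE Ii /nonadj eqxx.
Qed.
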